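(* Let $A$ be a nicely essential subring of a ring $S$. Then: (a) If $L,L'$ are left ideals of $A$ with $L\cap L'=0$, then $SL\cap SL'=0$; moreover $\operatorname{udim}(S)=\operatorname{udim}(A)$. Also $\mathcal Z(A)=A\cap\mathcal Z(S)$, and $\mathcal Z(A)$ is a nicely essential left $A$-submodule of $\mathcal Z(S)$ (i.e. for every finite set $E$ of non-zero elements of $\mathcal Z(S)$ there is $a\in A$ with $0\ne ax\in\mathcal Z(A)$ for all $x\in E$). (b) Let $L\subseteq S$ be any non-zero left $A$-submodule. Then the left ideal $A\cap L$ of $A$ is uniform (respectively, essential) in $A$ if and only if the left ideal $SL$ of $S$ is uniform (respectively, essential) in $S$.
   Context: A subring $A$ of a ring $S$ (same identity) is a nicely essential subring if for every finite set $E\subseteq S$ of non-zero elements there exists $a\in A$ with $0\neq ax\in A$ for all $x\in E$. $\operatorname{udim}$ of a ring denotes its left uniform dimension (supremum of cardinals $\mathfrak N$ such that the ring contains a direct sum of $\mathfrak N$ non-zero left ideals; possibly infinite). For a ring $B$, $\mathcal Z(B)$ is the left singular ideal: the set of $x\in B$ whose left annihilator $\{b\in B: bx=0\}$ contains an essential left ideal of $B$. For a subset $L\subseteq S$, $SL$ is the additive subgroup generated by products $sl$. *)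

From mathcomp Require Import all_boot all_order all_algebra.
Set Implicit Arguments. Unset Strict Implicit. Unset Printing Implicit Defensive.
Import GRing.Theory.
Local Open Scope ring_scope.

(* A subring A of S (same
   identity) is handled as a subset of S; the ring A is A with the operations
   of S.  Notions "of the ring R" below are relative to a subset R of S
   (R = fun _ => True for S itself). *)

Section Defs.
Variable S : pzRingType.

Definition is_subring (A : S -> Prop) : Prop :=
  A 1 /\ (forall x y, A x -> A y -> A (x - y)) /\
  (forall x y, A x -> A y -> A (x * y)).

Definition nicely_essential_subring (A : S -> Prop) : Prop :=
  is_subring A /\
  forall E : seq S, (forall x, x \in E -> x != 0) ->
    exists2 a, A a & forall x, x \in E -> a * x != 0 /\ A (a * x).

Definition left_submodule (R L : S -> Prop) : Prop :=
  L 0 /\ (forall x y, L x -> L y -> L (x + y)) /\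
  (forall r x, R r -> L x -> L (r * x)).

Definition left_ideal (R L : S -> Prop) : Prop :=
  (forall x, L x -> R x) /\ left_submodule R L.

Definition nonzero (L : S -> Prop) : Prop := exists2 x, L x & x != 0.

Definition trivial_meet (L L' : S -> Prop) : Prop :=
  forall x, L x -> L' x -> x = 0.

Definition essential_in (R L : S -> Prop) : Prop :=
  left_ideal R L /\
  forall L', left_ideal R L' -> nonzero L' -> ~ trivial_meet L L'.

Definition uniform_in (R L : S -> Prop) : Prop :=
  left_ideal R L /\ nonzero L /\
  forall U V, left_ideal R U -> left_ideal R V ->
    (forall x, U x -> L x) -> (forall x, V x -> L x) ->
    nonzero U -> nonzero V -> ~ trivial_meet U V.

Definition independent (I : Type) (L : I -> S -> Prop) : Prop :=
  forall (n : nat) (idx : 'I_n -> I) (x : 'I_n -> S),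
    injective idx -> (forall k, L (idx k) (x k)) ->
    \sum_(k < n) x k = 0 -> forall k, x k = 0.

(* udim(R) <= |K| : every direct sum of non-zero left ideals of R is
   indexed by a set of cardinality at most |K| *)
Definition udim_le (R : S -> Prop) (K : Type) : Prop :=
  forall (I : Type) (L : I -> S -> Prop),
    (forall i, left_ideal R (L i) /\ nonzero (L i)) -> independent L ->
    exists f : I -> K, injective f.

(* udim(R) = udim(R') as cardinals: they have the same cardinal upper bounds *)
Definition udim_eq (R R' : S -> Prop) : Prop :=
  forall K : Type, udim_le R K <-> udim_le R' K.

Definition singular (R : S -> Prop) (x : S) : Prop :=
  R x /\ exists E, essential_in R E /\ forall e, E e -> e * x = 0.

(* SL: additive subgroup generated by the products s * l, l in L *)
Definition genS (L : S -> Prop) (x : S) : Prop :=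
  exists (n : nat) (s l : 'I_n -> S),
    (forall k, L (l k)) /\ x = \sum_(k < n) s k * l k.

Definition fullset (x : S) : Prop := True.
End Defs.

From mathcomp Require Import all_boot all_order all_algebra.
From Stdlib Require Import Classical IndefiniteDescription.
Import GRing.Theory.
Set Implicit Arguments. Unset Strict Implicit. Unset Printing Implicit Defensive.
Local Open Scope ring_scope.

(* Every y in SL is a finite sum of terms s_k l_k with l_k in L, so any a in A
   for which all the a s_k lie in A moves y back into L.  A nicely essential A
   supplies such an a for finitely many elements at once, keeping the non-zero
   ones non-zero.  This transports non-zero intersections in both directions
   between left ideals of A and left ideals of S: trivial meets and
   independence pass from L to SL, essential and uniform left ideals
   correspond, and an essential left ideal of A annihilating x generates one
   of S annihilating x, and conversely. *)

Section Generated.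
Variable S : pzRingType.
Implicit Types (R L U V : S -> Prop) (x y : S).

Lemma trivial_meetPn U V : ~ trivial_meet U V <-> exists x, [/\ U x, V x & x != 0].
Proof.
split=> [nUV | [x [Ux Vx nx]] UV]; last by move: nx; rewrite (UV x Ux Vx) eqxx.
apply: NNPP => nex; apply: nUV => x Ux Vx.
by apply: NNPP => nx; apply: nex; exists x; split=> //; apply/eqP.
Qed.

Lemma fullset_subring : is_subring (@fullset S).
Proof. by []. Qed.

Lemma left_submodule_meet R U V : left_submodule R U -> left_submodule R V ->
  left_submodule R (fun x => U x /\ V x).
Proof.
move=> [U0 [UD UM]] [V0 [VD VM]]; split=> //; split.
  by move=> x y [? ?] [? ?]; split; [apply: UD | apply: VD].
by move=> r x Rr [? ?]; split; [apply: UM | apply: VM].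
Qed.

Lemma left_ideal_submodule R L : left_ideal (@fullset S) L -> left_submodule R L.
Proof. by move=> [_ [L0 [LD LM]]]; split=> //; split=> // r x _; apply: LM. Qed.

Lemma independent_sub (I : Type) (L L' : I -> S -> Prop) :
  (forall i x, L' i x -> L i x) -> independent L -> independent L'.
Proof.
by move=> L'L indL n idx x inj_idx L'x; apply: indL inj_idx _ => k; apply: L'L.
Qed.

Lemma mem_genS L x : L x -> genS L x.
Proof.
by move=> Lx; exists 1%N, (fun=> 1), (fun=> x); split=> //; rewrite big_ord1 mul1r.
Qed.

Lemma genS_one L x : L 1 -> genS L x.
Proof.
by move=> L1; exists 1%N, (fun=> x), (fun=> 1); split=> //; rewrite big_ord1 mulr1.
Qed.

Lemma genS_mono U V x : (forall z, U z -> V z) -> genS U x -> genS V x.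
Proof. by move=> UV [n [s [l [Ul ->]]]]; exists n, s, l; split=> // k; apply: UV. Qed.

Lemma genS_left_ideal L : left_ideal (@fullset S) (genS L).
Proof.
split=> //; split.
  by exists 0%N, (fun=> 0), (fun=> 0); split=> [[]//|]; rewrite big_ord0.
split=> [x y [n [s [l [Ll ->]]]] [m [t [u [Lu ->]]]] | r x _ [n [s [l [Ll ->]]]]].
  exists (n + m)%N, (fun k => match split k with inl i => s i | inr j => t j end),
    (fun k => match split k with inl i => l i | inr j => u j end).
  split=> [k|]; first by case: (split k).
  rewrite big_split_ord /=.
  by congr (_ + _); apply: eq_bigr => i _;
    rewrite ?(unsplitK (inl _ i)) ?(unsplitK (inr _ i)).
exists n, (fun k => r * s k), l; split=> //.
by rewrite mulr_sumr; apply: eq_bigr => i _; rewrite mulrA.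
Qed.

Lemma genS_nonzero L : nonzero L -> nonzero (genS L).
Proof. by move=> [x Lx nx]; exists x => //; apply: mem_genS. Qed.

Lemma genS_multiplier R L y : left_submodule R L -> genS L y ->
  exists E : seq S, forall a, (forall e, e \in E -> R (a * e)) -> L (a * y).
Proof.
move=> [L0 [LD LM]] [n [s [l [Ll ->]]]]; exists (map s (enum 'I_n)) => a aER.
rewrite mulr_sumr; apply: (big_ind L) => // k _; rewrite mulrA; apply: LM => //.
by apply: aER; apply: map_f; rewrite mem_enum.
Qed.

End Generated.

Section Subring.
Variable S : pzRingType.
Variable R : S -> Prop.
Hypothesis subR : is_subring R.
Implicit Types (L E : S -> Prop) (x y : S).

Lemma subring0 : R 0.
Proof. by case: subR => R1 [RB _]; rewrite -(subrr 1); apply: RB. Qed.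

Lemma subringD x y : R x -> R y -> R (x + y).
Proof.
case: subR => _ [RB _] Rx Ry; rewrite -[y]opprK -[- y]sub0r.
by apply: (RB) => //; apply: (RB) => //; apply: subring0.
Qed.

Lemma subringM x y : R x -> R y -> R (x * y).
Proof. by case: subR => _ [_ RM]; apply: RM. Qed.

Lemma subring_submodule : left_submodule R R.
Proof. by split; [apply: subring0 | split; [apply: subringD | apply: subringM]]. Qed.

Lemma left_ideal_subring_meet L : left_submodule R L ->
  left_ideal R (fun x => R x /\ L x).
Proof.
by move=> RL; split=> [x []//|]; apply: left_submodule_meet subring_submodule RL.
Qed.

Lemma essential_subring : essential_in R R.
Proof.
split=> [|L [LR _] [x Lx nx]]; first by split=> //; apply: subring_submodule.
by apply/trivial_meetPn; exists x; split=> //; apply: LR.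
Qed.

Lemma essential_mono E E' : essential_in R E -> left_ideal R E' ->
  (forall x, E x -> E' x) -> essential_in R E'.
Proof.
move=> [_ essE] idE' EE'; split=> // L idL nzL.
have /trivial_meetPn[x [Ex Lx nx]] := essE L idL nzL.
by apply/trivial_meetPn; exists x; split=> //; apply: EE'.
Qed.

Lemma essential_meet E1 E2 : essential_in R E1 -> essential_in R E2 ->
  essential_in R (fun x => E1 x /\ E2 x).
Proof.
move=> [[E1R E1m] ess1] [[_ E2m] ess2].
split=> [|L [LR Lm] nzL]; first by split=> [x [/E1R]//|]; apply: left_submodule_meet.
have /trivial_meetPn[x [E1x Lx nx]] := ess1 L (conj LR Lm) nzL.
have idE1L : left_ideal R (fun z => E1 z /\ L z).
  by split=> [z [/E1R]//|]; apply: left_submodule_meet.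
have nzE1L : nonzero (fun z => E1 z /\ L z) by exists x.
have /trivial_meetPn[y [E2y [E1y Ly] ny]] := ess2 _ idE1L nzE1L.
by apply/trivial_meetPn; exists y.
Qed.

(* For a left ideal L of R, either L r = 0 and L lies in (E : r), or the
   non-zero left ideal L r meets E in some l r with l in L and in (E : r). *)
Lemma essential_colon E r : essential_in R E -> R r ->
  essential_in R (fun e => R e /\ E (e * r)).
Proof.
move=> [[ER [E0 [ED EM]]] essE] Rr.
have idEr : left_ideal R (fun e => R e /\ E (e * r)).
  split=> [x []//|]; split; first by rewrite mul0r; split=> //; apply: subring0.
  split=> [x y [Rx Exr] [Ry Eyr] | t x Rt [Rx Exr]].
    by split; [apply: subringD | rewrite mulrDl; apply: ED].
  by split; [apply: subringM | rewrite -mulrA; apply: EM].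
split=> // L [LR [L0 [LD LM]]] [l0 Ll0 nl0].
have [[l [Ll nlr]] | Lr0] := classic (exists l, L l /\ l * r != 0); last first.
  have l0r : l0 * r = 0.
    by apply: NNPP => nl0r; apply: Lr0; exists l0; split=> //; apply/eqP.
  by apply/trivial_meetPn; exists l0; split=> //; rewrite l0r; split=> //; apply: LR.
pose Lr z := exists2 l, L l & z = l * r.
have idLr : left_ideal R Lr.
  split=> [z [l' Ll' ->]|]; first by apply: subringM => //; apply: LR.
  split; first by exists 0; rewrite ?mul0r.
  split=> [z w [l1 Ll1 ->] [l2 Ll2 ->] | t z Rt [l1 Ll1 ->]].
    by exists (l1 + l2); rewrite ?mulrDl //; apply: LD.
  by exists (t * l1); rewrite ?mulrA //; apply: LM.
have nzLr : nonzero Lr by exists (l * r) => //; exists l.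
have /trivial_meetPn[z [Ez [l1 Ll1 def_z] nz]] := essE Lr idLr nzLr.
subst z.
have nl1 : l1 != 0 by apply: contraNneq nz => ->; rewrite mul0r.
by apply/trivial_meetPn; exists l1; split=> //; split=> //; apply: LR.
Qed.

Lemma singular_submodule : left_submodule R (singular R).
Proof.
split.
  split; first exact: subring0.
  by exists R; split=> [|e _]; [apply: essential_subring | rewrite mulr0].
split=> [x y [Rx [E1 [ess1 E1x]]] [Ry [E2 [ess2 E2y]]] | r x Rr [Rx [E [essE Ex]]]].
  split; first exact: subringD.
  exists (fun e => E1 e /\ E2 e); split; first exact: essential_meet.
  by move=> e [E1e E2e]; rewrite mulrDr E1x // E2y // addr0.
split; first exact: subringM.
exists (fun e => R e /\ E (e * r)); split; first exact: essential_colon.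
by move=> e [_ Eer]; rewrite mulrA Ex.
Qed.

End Subring.

Section NicelyEssential.
Variable S : pzRingType.
Variable A : S -> Prop.
Hypothesis niceA : nicely_essential_subring A.
Implicit Types (L U V : S -> Prop) (x y : S).

Let subA : is_subring A := proj1 niceA.

Lemma nicely_essential_multiplier (X : seq S) : exists2 a, A a &
  forall x, x \in X -> A (a * x) /\ (x != 0 -> a * x != 0).
Proof.
have nzX x : x \in [seq x <- X | x != 0] -> x != 0 by rewrite mem_filter => /andP[].
have [a Aa aX] := proj2 niceA _ nzX; exists a => // x Xx.
have [->|nx] := eqVneq x 0; first by rewrite mulr0; split=> //; apply: subring0.
by have [] := aX x; rewrite ?mem_filter ?nx.
Qed.

Lemma genS_common_multiplier n (L : 'I_n -> S -> Prop) (y : 'I_n -> S) :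
  (forall k, left_submodule A (L k)) -> (forall k, genS (L k) (y k)) ->
  exists2 a, A a & forall k, L k (a * y k) /\ (y k != 0 -> a * y k != 0).
Proof.
move=> Lm Ly.
have [X aXL] := @functional_choice _ _ _ (fun k => genS_multiplier (Lm k) (Ly k)).
have [a Aa aA] := nicely_essential_multiplier
  (flatten [seq X k | k <- enum 'I_n] ++ [seq y k | k <- enum 'I_n]).
exists a => // k; split.
  apply: aXL => e Xe; apply: (proj1 (aA e _)); rewrite mem_cat; apply/orP; left.
  by apply/flatten_mapP; exists k; rewrite ?mem_enum.
by apply: (proj2 (aA _ _)); rewrite mem_cat map_f ?orbT ?mem_enum.
Qed.

Lemma genS_common_multiplier2 L1 L2 y1 y2 :
  left_submodule A L1 -> left_submodule A L2 -> genS L1 y1 -> genS L2 y2 ->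
  exists2 a, A a & [/\ L1 (a * y1), L2 (a * y2) & (y1 != 0 -> a * y1 != 0)].
Proof.
move=> L1m L2m L1y1 L2y2.
pose L (k : 'I_2) := nth L1 [:: L1; L2] k; pose y (k : 'I_2) := nth 0 [:: y1; y2] k.
have [|k|a Aa aLy] := @genS_common_multiplier 2 L y.
- by case=> [[|[|]]].
- by case: k => [[|[|]]].
by exists a => //; have [aL1 nz1] := aLy ord0; have [aL2 _] := aLy ord_max.
Qed.

Lemma nonzero_subring_meet L : left_submodule A L -> nonzero L ->
  nonzero (fun x => A x /\ L x).
Proof.
move=> [_ [_ LM]] [x Lx nx].
have [a Aa ax] := nicely_essential_multiplier [:: x].
have [Aax nax] := ax x (mem_head _ _).
by exists (a * x); [split=> //; apply: LM | apply: nax].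
Qed.

Lemma nonzero_subring_meet_genS L U : left_submodule A L ->
  left_ideal (@fullset S) U -> (forall x, U x -> genS L x) -> nonzero U ->
  nonzero (fun x => A x /\ L x /\ U x).
Proof.
move=> Lm idU UL [u Uu nu].
have [a Aa [aLu aAu nau]] := genS_common_multiplier2 Lm (subring_submodule subA)
  (UL u Uu) (genS_one u (proj1 subA)).
exists (a * u); last exact: nau.
by split=> //; split=> //; case: idU => _ [_ [_ UM]]; apply: UM.
Qed.

Lemma genS_trivial_meet L L' : left_ideal A L -> left_ideal A L' ->
  trivial_meet L L' -> trivial_meet (genS L) (genS L').
Proof.
move=> [_ Lm] [_ L'm] LL' x Lx L'x; apply: NNPP => /eqP nx.
have [a _ [aL aL' nax]] := genS_common_multiplier2 Lm L'm Lx L'x.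
by move: (nax nx); rewrite (LL' _ aL aL') eqxx.
Qed.

Lemma independent_genS (I : Type) (L : I -> S -> Prop) :
  (forall i, left_submodule A (L i)) -> independent L ->
  independent (fun i => genS (L i)).
Proof.
move=> Lm indL n idx x inj_idx Lx sumx0 k.
have [a Aa aLx] := genS_common_multiplier (fun k => Lm (idx k)) Lx.
have ax0 : forall k, a * x k = 0.
  apply: indL inj_idx _ _ => [j|]; first exact: (proj1 (aLx j)).
  by rewrite -mulr_sumr sumx0 mulr0.
by apply: NNPP => /eqP nxk; move: (proj2 (aLx k) nxk); rewrite ax0 eqxx.
Qed.

Lemma udim_eq_nicely_essential : udim_eq (@fullset S) A.
Proof.
move=> K; split=> udimK I L idL indL.
  apply: (udimK I (fun i => genS (L i))).
    by move=> i; split; [apply: genS_left_ideal | apply: genS_nonzero (proj2 (idL i))].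
  by apply: independent_genS => // i; case: (idL i) => [[_ ?] _].
apply: (udimK I (fun i x => A x /\ L i x)); last first.
  by apply: independent_sub indL => i x [].
move=> i; have Lim := left_ideal_submodule A (proj1 (idL i)).
by split; [apply: left_ideal_subring_meet | apply: nonzero_subring_meet (proj2 (idL i))].
Qed.

Lemma essential_genS L : essential_in A L -> essential_in (@fullset S) (genS L).
Proof.
move=> [_ essL]; split=> [|L' idL' nzL']; first exact: genS_left_ideal.
have L'm := left_ideal_submodule A idL'.
have /trivial_meetPn[y [Ly [_ L'y] ny]] :=
  essL _ (left_ideal_subring_meet subA L'm) (nonzero_subring_meet L'm nzL').
by apply/trivial_meetPn; exists y; split=> //; apply: mem_genS.
Qed.

Lemma essential_subring_meet L : left_submodule A L ->
  essential_in (@fullset S) (genS L) -> essential_in A (fun x => A x /\ L x).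
Proof.
move=> Lm [_ essL]; split=> [|L' [L'A L'm] nzL']; first exact: left_ideal_subring_meet.
have /trivial_meetPn[y [Ly L'y ny]] :=
  essL (genS L') (genS_left_ideal _) (genS_nonzero nzL').
have [a _ [aL aL' nay]] := genS_common_multiplier2 Lm L'm Ly L'y.
apply/trivial_meetPn; exists (a * y).
by split; [split=> //; apply: L'A | | apply: nay].
Qed.

Lemma essential_subring_meet_genS L : left_submodule A L ->
  essential_in A (fun x => A x /\ L x) <-> essential_in (@fullset S) (genS L).
Proof.
move=> Lm; split=> [essAL | ]; last exact: essential_subring_meet.
apply: essential_mono (essential_genS essAL) (genS_left_ideal _) _ => x.
by apply: genS_mono => z [].
Qed.

Lemma singular_subring x : singular A x <-> A x /\ singular (@fullset S) x.
Proof.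
split=> [[Ax [E [essE Ex]]] | [Ax [_ [E [essE Ex]]]]].
  split=> //; split=> //; exists (genS E); split; first exact: essential_genS.
  move=> _ [n [s [l [El ->]]]]; rewrite mulr_suml big1 // => k _.
  by rewrite -mulrA Ex ?mulr0.
split=> //; exists (fun e => A e /\ E e); split=> [|e [_ Ee]]; last exact: Ex.
have Em := left_ideal_submodule A (proj1 essE).
apply: essential_subring_meet Em _.
by apply: essential_mono essE (genS_left_ideal _) _ => z; apply: mem_genS.
Qed.

Lemma uniform_genS L : left_submodule A L ->
  uniform_in A (fun x => A x /\ L x) -> uniform_in (@fullset S) (genS L).
Proof.
move=> Lm [_ [nzAL uniAL]]; split; first exact: genS_left_ideal.
split=> [|U V idU idV UL VL nzU nzV UV].
  by case: nzAL => x [_ Lx] nx; exists x => //; apply: mem_genS.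
pose meetL W x := A x /\ L x /\ W x.
have idmeet W : left_ideal (@fullset S) W -> left_ideal A (meetL W).
  by move=> idW; apply/left_ideal_subring_meet/left_submodule_meet/left_ideal_submodule.
apply: (uniAL (meetL U) (meetL V)) (idmeet _ idU) (idmeet _ idV) _ _ _ _ _.
- by move=> x [Ax [Lx _]].
- by move=> x [Ax [Lx _]].
- exact: nonzero_subring_meet_genS.
- exact: nonzero_subring_meet_genS.
- by move=> x [_ [_ Ux]] [_ [_ Vx]]; apply: UV.
Qed.

Lemma uniform_subring_meet L : left_submodule A L -> nonzero L ->
  uniform_in (@fullset S) (genS L) -> uniform_in A (fun x => A x /\ L x).
Proof.
move=> Lm nzL [_ [_ uniL]]; split; first exact: left_ideal_subring_meet.
split=> [|U V [_ Um] [_ Vm] UL VL nzU nzV]; first exact: nonzero_subring_meet.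
have genS_sub W : (forall x, W x -> A x /\ L x) -> forall x, genS W x -> genS L x.
  by move=> WL x; apply: genS_mono => z /WL[].
have /trivial_meetPn[y [Uy Vy ny]] := uniL _ _ (genS_left_ideal U) (genS_left_ideal V)
  (genS_sub U UL) (genS_sub V VL) (genS_nonzero nzU) (genS_nonzero nzV).
have [a _ [aU aV nay]] := genS_common_multiplier2 Um Vm Uy Vy.
by apply/trivial_meetPn; exists (a * y); split=> //; apply: nay.
Qed.

Lemma uniform_subring_meet_genS L : left_submodule A L -> nonzero L ->
  uniform_in A (fun x => A x /\ L x) <-> uniform_in (@fullset S) (genS L).
Proof. by move=> Lm nzL; split; [apply: uniform_genS | apply: uniform_subring_meet]. Qed.

Lemma nicely_essential_singular (X : seq S) :
  (forall x, x \in X -> x != 0 /\ singular (@fullset S) x) ->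
  exists2 a, A a & forall x, x \in X -> a * x != 0 /\ singular A (a * x).
Proof.
move=> nzX; have [a Aa aX] := proj2 niceA X (fun x Xx => proj1 (nzX x Xx)).
exists a => // x Xx; have [nax Aax] := aX x Xx; split=> //.
apply/singular_subring; split=> //.
have [_ [_ singM]] := singular_submodule (fullset_subring S).
by apply: singM => //; apply: (proj2 (nzX x Xx)).
Qed.

End NicelyEssential.

Theorem mainTheorem3 (S : pzRingType) (A : S -> Prop) :
  nicely_essential_subring A ->
  ((forall L L' : S -> Prop, left_ideal A L -> left_ideal A L' ->
      trivial_meet L L' -> trivial_meet (genS L) (genS L')) /\
   udim_eq (@fullset S) A /\
   (forall x, singular A x <-> A x /\ singular (@fullset S) x) /\
   (left_submodule A (singular A) /\
    (forall x, singular A x -> singular (@fullset S) x) /\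
    forall E : seq S, (forall x, x \in E -> x != 0 /\ singular (@fullset S) x) ->
      exists2 a, A a & forall x, x \in E -> a * x != 0 /\ singular A (a * x))) /\
  (forall L : S -> Prop, left_submodule A L -> nonzero L ->
     (uniform_in A (fun x => A x /\ L x) <-> uniform_in (@fullset S) (genS L)) /\
     (essential_in A (fun x => A x /\ L x) <-> essential_in (@fullset S) (genS L))).
Proof.
move=> niceA; split; last first.
  move=> L Lm nzL; split; first exact: uniform_subring_meet_genS.
  exact: essential_subring_meet_genS.
split; first exact: genS_trivial_meet.
split; first exact: udim_eq_nicely_essential.
split; first exact: singular_subring.
split; first exact: singular_submodule (proj1 niceA).
split; last exact: nicely_essential_singular.
by move=> x /(singular_subring niceA)[].
Qed.
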